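(* Let $A$ be an eNTA with a single clock $x$, and let $\gamma = q_0\tau_1 q_1\tau_2\cdots\tau_n q_n$ be a reachable path of $A$. For $1\le i\le n$ let $T_i$ be the set of times at which the $i$-th transition $\tau_i$ is taken, over all runs along $\gamma$, and let $s_i^{\gamma} := \sup T_i - \inf T_i \in \mathbb{R}_{\ge 0}\cup\{\infty\}$. Let $d_i^{\gamma}$ be the feasible durations and $w_i^{\gamma}$ the trail widths defined in the context. Then for every $1\le i\le n$, $$ s_i^{\gamma} = w_{i-1}^{\gamma} + d_i^{\gamma}, $$ and $$ w_i^{\gamma} = \begin{cases} 0 & \text{if } i=0,\\ s_i^{\gamma} & \text{if } i>0 \text{ and } x \text{ is reset on } \tau_i,\\ w_{i-1}^{\gamma} & \text{otherwise.}\end{cases} $$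
   Context: **Automata.** An eNTA (non-deterministic timed automaton with silent transitions) is a tuple $A=(\mathcal{Q},q_0,\Sigma_\epsilon,\mathcal{C},\mathcal{T})$ with the following components. - $\mathcal{Q}$ is a finite set of locations and $q_0\in\mathcal Q$ is the initial location. - $\Sigma$ is a finite set of observable actions, and $\Sigma_\epsilon=\Sigma\cup\{\epsilon\}$, where $\epsilon$ is the silent action. - $\mathcal{C}$ is a finite set of clocks. - $\mathcal{T}$ is a finite set of transitions $(q,a,g,\mathcal{C}_{rst},q')$. Here $q,q'\in\mathcal Q$, $a\in\Sigma_\epsilon$, $\mathcal{C}_{rst}\subseteq\mathcal C$ is the set of clocks reset, and the guard $g$ is a finite conjunction of constraints $c\sim n$ with $c\in\mathcal C$, $\sim\in\{<,\le,=,\ge,>\}$ and $n\in\mathbb{N}_0$. **Valuations and runs.** A valuation is a map $v:\mathcal C\to\mathbb{R}_{\ge0}$. We write $(v+d)(c)=v(c)+d$, and $v[\mathcal C_{rst}]$ for the valuation that sets the clocks in $\mathcal C_{rst}$ to $0$ and leaves the others unchanged. A run is a finite sequence $$(q_0,\mathbf 0)\xrightarrow{d_1}(q_0,\mathbf 0+d_1)\xrightarrow{\tau_1}(q_1,v_1)\xrightarrow{d_2}\cdots\xrightarrow{\tau_k}(q_k,v_k),$$ where $d_i\ge0$, $\tau_i=(q_{i-1},a_i,g_i,\mathcal C_i,q_i)\in\mathcal T$, $v_0=\mathbf 0$, $v_{i-1}+d_i\models g_i$ and $v_i=(v_{i-1}+d_i)[\mathcal C_i]$. The transition $\tau_i$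 is taken at time $t_i=d_1+\cdots+d_i$. **Paths.** A path $\gamma=q_0\tau_1q_1\cdots\tau_nq_n$ is a sequence of transitions with $\tau_i$ going from $q_{i-1}$ to $q_i$. A run along $\gamma$ is a run whose transitions are exactly $\tau_1,\dots,\tau_n$ in this order, and $\gamma$ is reachable if some run along it exists. **Feasible durations $d_i^\gamma$.** Let $l_i^\gamma$ and $u_i^\gamma$ be the lower and upper bounds imposed on $x$ by the guard of $\tau_i$, with $l_i^\gamma=u_i^\gamma$ for an equality constraint, $l_i^\gamma=0$ if there is no lower bound, and $u_i^\gamma=\infty$ if there is no upper bound. 1. Forward adjustment: for $i=1,\dots,n-1$ in increasing order, if $x$ is not reset on $\tau_i$ and $l_{i+1}^\gamma<l_i^\gamma$, set $l_{i+1}^\gamma:=l_i^\gamma$. 2. Backward adjustment: for $i=n-1,\dots,1$ in decreasing order, if $x$ is not reset on $\tau_i$ and $u_i^\gamma>u_{i+1}^\gamma$, set $u_i^\gamma:=u_{i+1}^\gamma$. 3. Define $d_i^\gamma:=\max\{u_i^\gamma-l_i^\gamma,0\}$. **Trail widths $w_i^\gamma$.** The trail of $\gamma$ is the set of all points $(t,x)$ visited by the runs along $\gamma$, where $t$ is the global elapsed time. For $0\le i\le n$, $w_i^\gamma$ is the width of the trail after the $i$-th transition. Concretely, let $j\le i$ be the largest index such that $x$ is reset on $\tau_j$. If such a $j$ exists, $w_i^\gamma:=s_j^\gamma$, the length of the set of times at which $x$ was last reset. If no such $j$ exists (so $x$ was last set to $0$ at time $0$), $w_i^\gamma:=0$.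 *)

From Stdlib Require Import Reals Lra Lia Arith List ClassicalEpsilon.
Import ListNotations.
Open Scope R_scope.

(** * Single-clock eNTA.  The unique clock is called x; guards are
    conjunctions of constraints [x ~ n] with n a natural number. *)

Inductive cmp := CLt | CLe | CEq | CGe | CGt.

Record constr := Constr { c_op : cmp; c_bound : nat }.

Definition constr_sat (c : constr) (v : R) : Prop :=
  let n := INR (c_bound c) in
  match c_op c with
  | CLt => v < n | CLe => v <= n | CEq => v = n | CGe => v >= n | CGt => v > n
  end.

Definition guard := list constr.

Definition guard_sat (g : guard) (v : R) : Prop :=
  Forall (fun c => constr_sat c v) g.

(** A transition (q, a, g, C_rst, q'); [a = None] is the silent action ε;
    since there is a single clock, C_rst ⊆ {x} is a boolean ([true] = x reset). *)
Record transition (Q Sig : Type) := Trans {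
  t_src : Q; t_act : option Sig; t_guard : guard; t_rst : bool; t_tgt : Q }.
Arguments Trans {Q Sig}.
Arguments t_src {Q Sig}. Arguments t_act {Q Sig}. Arguments t_guard {Q Sig}.
Arguments t_rst {Q Sig}. Arguments t_tgt {Q Sig}.

(** An eNTA with the single clock x; finite sets are given as lists. *)
Record eNTA (Q Sig : Type) := MkENTA {
  locs : list Q; init : Q; acts : list Sig; trans : list (transition Q Sig) }.
Arguments locs {Q Sig}. Arguments init {Q Sig}.
Arguments acts {Q Sig}. Arguments trans {Q Sig}.

Definition wf_eNTA {Q Sig} (A : eNTA Q Sig) : Prop :=
  In (init A) (locs A) /\
  Forall (fun t => In (t_src t) (locs A) /\ In (t_tgt t) (locs A) /\
                   match t_act t with Some a => In a (acts A) | None => True end)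
         (trans A).

(** Paths q0 τ1 q1 ... τn qn, represented by the list [τ1; ...; τn]. *)
Fixpoint chain_from {Q Sig} (q : Q) (g : list (transition Q Sig)) : Prop :=
  match g with
  | [] => True
  | t :: g' => t_src t = q /\ chain_from (t_tgt t) g'
  end.

Definition is_path {Q Sig} (A : eNTA Q Sig) (g : list (transition Q Sig)) : Prop :=
  Forall (fun t => In t (trans A)) g /\ chain_from (init A) g.

(** [run_along v t g tms]: starting in valuation [v] at global time [t],
    the transitions of [g] are taken in order at the global times [tms]
    (delays t' - t >= 0, guard checked on v + delay, then reset applied). *)
Fixpoint run_along {Q Sig} (v t : R) (g : list (transition Q Sig)) (tms : list R)
  : Prop :=
  match g, tms with
  | [], [] => True
  | tr :: g', t' :: tms' =>
      t <= t' /\ guard_sat (t_guard tr) (v + (t' - t)) /\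
      run_along (if t_rst tr then 0 else v + (t' - t)) t' g' tms'
  | _, _ => False
  end.

Definition is_run_along {Q Sig} (g : list (transition Q Sig)) (tms : list R) : Prop :=
  run_along 0 0 g tms.

Definition reachable {Q Sig} (g : list (transition Q Sig)) : Prop :=
  exists tms, is_run_along g tms.

(** T_i : times at which τ_i (1 <= i <= n) is taken, over all runs along g. *)
Definition T_set {Q Sig} (g : list (transition Q Sig)) (i : nat) (t : R) : Prop :=
  exists tms, is_run_along g tms /\ nth (i - 1) tms 0 = t.

(** Extended nonnegative reals: [None] = ∞. *)
Definition is_lower_bound (E : R -> Prop) (m : R) : Prop := forall x, E x -> m <= x.
Definition is_glb (E : R -> Prop) (m : R) : Prop :=
  is_lower_bound E m /\ forall b, is_lower_bound E b -> b <= m.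

Definition sup_val (E : R -> Prop) : R := epsilon (inhabits 0) (fun M => is_lub E M).
Definition inf_val (E : R -> Prop) : R := epsilon (inhabits 0) (fun m => is_glb E m).

Definition set_width (E : R -> Prop) : option R :=
  if excluded_middle_informative (bound E) then Some (sup_val E - inf_val E)
  else None.

Definition s_gamma {Q Sig} (g : list (transition Q Sig)) (i : nat) : option R :=
  set_width (T_set g i).

Definition c_lower (c : constr) : nat :=
  match c_op c with CEq | CGe | CGt => c_bound c | _ => 0%nat end.
Definition c_upper (c : constr) : option nat :=
  match c_op c with CEq | CLe | CLt => Some (c_bound c) | _ => None end.

Definition omin (a b : option nat) : option nat :=
  match a, b with
  | None, _ => b | _, None => a | Some x, Some y => Some (Nat.min x y) end.

Definition g_lower (g : guard) : nat := fold_right (fun c l => Nat.max (c_lower c) l) 0%nat g.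
Definition g_upper (g : guard) : option nat := fold_right (fun c u => omin (c_upper c) u) None g.

(** Forward adjustment: l_{i+1} := max(l_{i+1}, l_i) if x not reset on τ_i
    (processed in increasing order; [c] carries the adjusted l_i, or 0). *)
Fixpoint fwd_lower {Q Sig} (c : nat) (g : list (transition Q Sig)) : list nat :=
  match g with
  | [] => []
  | t :: g' => let l := Nat.max c (g_lower (t_guard t)) in
               l :: fwd_lower (if t_rst t then 0%nat else l) g'
  end.

(** Backward adjustment: u_i := min(u_i, u_{i+1}) if x not reset on τ_i
    (processed in decreasing order, using the adjusted u_{i+1}). *)
Fixpoint bwd_upper {Q Sig} (g : list (transition Q Sig)) : list (option nat) :=
  match g with
  | [] => []
  | t :: g' =>
      let r := bwd_upper g' in
      let u := g_upper (t_guard t) in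
      (match r with
       | [] => u
       | u' :: _ => if t_rst t then u else omin u u'
       end) :: r
  end.

(** d_i^γ = max(u_i - l_i, 0) for 1 <= i <= n ([None] = ∞). *)
Definition d_gamma {Q Sig} (g : list (transition Q Sig)) (i : nat) : option nat :=
  let l := nth (i - 1) (fwd_lower 0%nat g) 0%nat in
  match nth (i - 1) (bwd_upper g) None with
  | None => None
  | Some u => Some (u - l)%nat
  end.

Definition reset_at {Q Sig} (g : list (transition Q Sig)) (i : nat) : bool :=
  match i with
  | O => false
  | S k => match nth_error g k with Some t => t_rst t | None => false end
  end.

Fixpoint last_reset {Q Sig} (g : list (transition Q Sig)) (i : nat) : option nat :=
  match i with
  | O => None
  | S k => if reset_at g (S k) then Some (S k) else last_reset g k
  end.

Definition w_gamma {Q Sig} (g : list (transition Q Sig)) (i : nat) : option R :=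
  match last_reset g i with
  | Some j => s_gamma g j
  | None => Some 0
  end.

Definition eadd (a : option R) (b : option nat) : option R :=
  match a, b with
  | Some x, Some y => Some (x + INR y)
  | _, _ => None
  end.

(* Start a run at global time v with clock value v, so that the clock equals
   the global time until the first reset.  Then the times at which the k-th
   transition is taken form an interval (endpoints possibly excluded).  For
   the first transition its endpoints are max(v, l) and the upper bound u of
   the guard, tightened by the guards of the following transitions up to the
   next reset.  Without a reset on the first transition, the times of a later
   transition, started from a time t of the first one, form an interval with
   left end max(t, a) + b and a fixed right end; their union over t is again
   an interval.  With a reset, these times are the times of the first
   transition plus the times of a run of the tail started at 0: a Minkowski
   sum of intervals, whose widths add up.  The widths therefore telescope
   along the resets, which is the claim. *)

From Stdlib Require Import Reals Arith List Lra Lia ClassicalEpsilon.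
Import ListNotations.
Open Scope R_scope.

Ltac unfold_minmax := unfold Rmax, Rmin in *;
  repeat match goal with
  | |- context [Rle_dec ?a ?b] => destruct (Rle_dec a b)
  | H: context [Rle_dec ?a ?b] |- _ => destruct (Rle_dec a b)
  end; try lra.

(** * Intervals with extended right end *)

(* [None] is the right end +∞ throughout. *)
Definition le_ebound (ob : option R) (x : R) : Prop :=
  match ob with Some b => x <= b | None => True end.
Definition lt_ebound (ob : option R) (x : R) : Prop :=
  match ob with Some b => x < b | None => True end.
Definition eaddR (a b : option R) : option R :=
  match a, b with Some x, Some y => Some (x + y) | _, _ => None end.
Definition eminR (a b : option R) : option R :=
  match a, b with None, _ => b | _, None => a | Some x, Some y => Some (Rmin x y) end.

(* [E] is a nonempty interval with infimum [a] and supremum [ob]. *)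
Definition has_hull (E : R -> Prop) (a : R) (ob : option R) : Prop :=
  (exists x, E x) /\ (forall x, E x -> a <= x /\ le_ebound ob x) /\
  (forall x, a < x -> lt_ebound ob x -> E x).

Lemma lt_ebound_le ob e t : le_ebound ob e -> t < e -> lt_ebound ob t.
Proof. destruct ob; simpl; lra. Qed.

Lemma le_ebound_le ob e t : le_ebound ob e -> t <= e -> le_ebound ob t.
Proof. destruct ob; simpl; lra. Qed.

Lemma le_eminR a b x : le_ebound (eminR a b) x <-> le_ebound a x /\ le_ebound b x.
Proof.
  destruct a, b; simpl; try tauto.
  split; [intros; unfold_minmax | intros [? ?]; unfold_minmax].
Qed.

Lemma lt_eminR a b x : lt_ebound (eminR a b) x <-> lt_ebound a x /\ lt_ebound b x.
Proof.
  destruct a, b; simpl; try tauto.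
  split; [intros; unfold_minmax | intros [? ?]; unfold_minmax].
Qed.

Lemma eaddR_eadd_assoc a b d : eadd (eaddR a b) d = eaddR a (eadd b d).
Proof. destruct a, b, d; simpl; auto. f_equal; ring. Qed.

Lemma has_hull_ext E E' a ob :
  (forall x, E x <-> E' x) -> has_hull E a ob -> has_hull E' a ob.
Proof.
  intros HE [[e He] [Hin Hopen]]. split; [exists e; apply HE, He | split].
  - intros x Hx. apply Hin, HE, Hx.
  - intros x H1 H2. apply HE, Hopen; auto.
Qed.

Lemma has_hull_below E a ob y : has_hull E a ob -> a < y -> exists t, E t /\ t < y.
Proof.
  intros [[e He] [Hin Hopen]] Hy. destruct (Rlt_or_le e y) as [H|H]; [eauto|].
  exists ((a + y) / 2). destruct (Hin e He). split; [|lra].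
  apply Hopen; [lra|]. eapply lt_ebound_le; eauto. lra.
Qed.

Lemma has_hull_above E a ob t : has_hull E a ob -> lt_ebound ob t -> exists y, E y /\ t <= y.
Proof.
  intros [[e He] [Hin Hopen]] Ht. destruct (Rle_or_lt t e) as [H|H]; [eauto|].
  destruct (Hin e He) as [H1 H2]. destruct ob as [b|]; simpl in *.
  - exists ((t + b) / 2). split; [apply Hopen; simpl; lra | lra].
  - exists (t + 1). split; [apply Hopen; simpl; auto; lra | lra].
Qed.

Lemma has_hull_minkowski A B a b oa ob : has_hull A a oa -> has_hull B b ob ->
  has_hull (fun x => exists p q, A p /\ B q /\ x = p + q) (a + b) (eaddR oa ob).
Proof.
  intros HA HB. pose proof HA as [[ea Ea] [InA OpA]]. pose proof HB as [[eb Eb] [InB OpB]].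
  split; [exists (ea + eb), ea, eb; auto | split].
  - intros x [p [q [Ap [Bq ->]]]]. destruct (InA p Ap), (InB q Bq). split; [lra|].
    destruct oa, ob; simpl in *; auto; lra.
  - intros x Hx Hlt. destruct ob as [bu|]; cycle 1.
    { destruct (has_hull_below _ _ _ (x - b) HA) as [p [Ap Hp]]; [lra|].
      exists p, (x - p). split; [|split; [apply OpB; simpl; auto; lra | ring]]; auto. }
    destruct oa as [au|]; cycle 1.
    { destruct (has_hull_below _ _ _ (x - a) HB) as [q [Bq Hq]]; [lra|].
      exists (x - q), q. split; [apply OpA; simpl; auto; lra | split; [auto | ring]]. }
    simpl in Hlt. destruct (InB eb Eb) as [Hb1 Hb2], (InA ea Ea) as [Ha1 Ha2].
    simpl in Hb2, Ha2.
    (* A degenerate factor is the singleton of its witness. *)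
    destruct (Req_dec b bu) as [Hbb|Hbb].
    { exists (x - eb), eb. split; [apply OpA; simpl; lra | split; [auto | ring]]. }
    destruct (Req_dec a au) as [Haa|Haa].
    { exists ea, (x - ea). split; [auto | split; [apply OpB; simpl; lra | ring]]. }
    set (p := (Rmax a (x - bu) + Rmin au (x - b)) / 2).
    assert (Rmax a (x - bu) < Rmin au (x - b)) by unfold_minmax.
    assert (a < p /\ p < au /\ x - bu < p /\ p < x - b) by (unfold p; unfold_minmax).
    exists p, (x - p). split; [apply OpA; simpl; lra|].
    split; [apply OpB; simpl; lra | ring].
Qed.

Lemma has_hull_union (T0 : R -> Prop) a0 ob0 (F : R -> R -> Prop) (f : R -> R) al be ob :
  has_hull T0 a0 ob0 -> (forall t, T0 t -> has_hull (F t) (f t) ob) ->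
  (forall t, f t = Rmax t al + be) ->
  has_hull (fun x => exists t, T0 t /\ F t x) (f a0) ob.
Proof.
  intros H0 HF Hf. pose proof H0 as [[e0 E0] [In0 _]]. split; [|split].
  - destruct (HF e0 E0) as [[x Hx] _]. eauto.
  - intros x [t [Tt Ft]]. destruct (HF t Tt) as [_ [Hin _]]. destruct (Hin x Ft).
    destruct (In0 t Tt). split; auto. rewrite Hf in *. unfold_minmax.
  - intros x Hx Hl. rewrite Hf in Hx.
    destruct (has_hull_below _ _ _ (x - be) H0) as [t [Tt Ht]]; [unfold_minmax|].
    exists t. split; auto. destruct (HF t Tt) as [_ [_ Hopen]]. apply Hopen; auto.
    rewrite Hf. unfold_minmax.
Qed.

Lemma has_hull_glb E a ob : has_hull E a ob -> is_glb E a.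
Proof.
  intros [[e He] [Hin Hopen]]. split; [intros x Hx; apply (Hin x Hx)|].
  intros m Hm. destruct (Rle_or_lt m a) as [|Ham]; auto. exfalso.
  assert (m <= e) by (apply Hm; auto). destruct (Hin e He).
  assert (E ((a + m) / 2)) by (apply Hopen; [lra | eapply lt_ebound_le; eauto; lra]).
  assert (m <= (a + m) / 2) by (apply Hm; auto). lra.
Qed.

Lemma has_hull_lub E a b : has_hull E a (Some b) -> is_lub E b.
Proof.
  intros [[e He] [Hin Hopen]]. split; [intros x Hx; apply (Hin x Hx)|].
  intros M HM. destruct (Rle_or_lt b M); auto. exfalso.
  assert (e <= M) by (apply HM; auto). destruct (Hin e He).
  assert (E ((M + b) / 2)) by (apply Hopen; simpl; lra).
  assert ((M + b) / 2 <= M) by (apply HM; auto). lra.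
Qed.

Lemma has_hull_unbounded E a : has_hull E a None -> ~ bound E.
Proof.
  intros [[e He] [Hin Hopen]] [M HM]. destruct (Hin e He).
  assert (E (Rmax a M + 1)) by (apply Hopen; simpl; auto; unfold_minmax).
  assert (Rmax a M + 1 <= M) by (apply HM; auto). unfold_minmax.
Qed.

Lemma set_width_hull E a ob :
  has_hull E a ob -> set_width E = option_map (fun b => b - a) ob.
Proof.
  intros HE. unfold set_width.
  destruct (excluded_middle_informative (bound E)) as [Hb|Hb]; destruct ob as [b|].
  - assert (Hlub := has_hull_lub _ _ _ HE). assert (Hglb := has_hull_glb _ _ _ HE).
    assert (Hsup : is_lub E (sup_val E)) by (unfold sup_val; apply epsilon_spec; eauto).
    assert (Hinf : is_glb E (inf_val E)) by (unfold inf_val; apply epsilon_spec; eauto).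
    rewrite (is_lub_u _ _ _ Hsup Hlub).
    destruct Hinf as [Hi1 Hi2], Hglb as [Hg1 Hg2].
    rewrite (Rle_antisym (inf_val E) a); auto.
  - exfalso. exact (has_hull_unbounded _ _ HE Hb).
  - exfalso. apply Hb. exists b. intros x Hx. apply (proj1 (proj2 HE) x Hx).
  - reflexivity.
Qed.

Lemma INR_max a b : INR (Nat.max a b) = Rmax (INR a) (INR b).
Proof.
  destruct (Nat.le_ge_cases a b) as [H|H].
  - rewrite Nat.max_r by auto. apply le_INR in H. unfold_minmax.
  - rewrite Nat.max_l by auto. apply le_INR in H. unfold_minmax.
Qed.

Lemma INR_min a b : INR (Nat.min a b) = Rmin (INR a) (INR b).
Proof.
  destruct (Nat.le_ge_cases a b) as [H|H].
  - rewrite Nat.min_l by auto. apply le_INR in H. unfold_minmax.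
  - rewrite Nat.min_r by auto. apply le_INR in H. unfold_minmax.
Qed.

Lemma INR_omin a b :
  option_map INR (omin a b) = eminR (option_map INR a) (option_map INR b).
Proof. destruct a, b; simpl; auto. rewrite INR_min; auto. Qed.

Lemma guard_sat_bounds gd x : 0 <= x -> guard_sat gd x ->
  INR (g_lower gd) <= x /\ le_ebound (option_map INR (g_upper gd)) x.
Proof.
  intros Hx. induction gd as [|c gd IH]; intros H; [simpl; split; [lra | exact I]|].
  inversion H as [|? ? Hc Hgd]; subst. destruct (IH Hgd) as [Hl Hu]. simpl.
  rewrite INR_max, INR_omin, le_eminR. unfold constr_sat in Hc.
  destruct c as [op n]; destruct op; unfold c_lower, c_upper; simpl in *;
    (split; [unfold_minmax | split; simpl; auto; lra]).
Qed.

Lemma guard_sat_between gd x : INR (g_lower gd) < x ->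
  lt_ebound (option_map INR (g_upper gd)) x -> guard_sat gd x.
Proof.
  induction gd as [|c gd IH]; intros Hl Hu; [constructor|].
  simpl in Hl, Hu. rewrite INR_max in Hl. rewrite INR_omin, lt_eminR in Hu.
  destruct Hu as [Hu Hu']. constructor.
  - unfold constr_sat. destruct c as [op n]; destruct op;
      unfold c_lower, c_upper in *; simpl in *; unfold_minmax.
  - apply IH; auto. unfold_minmax.
Qed.

(** * Runs *)

Section Runs.
Context {Q Sig : Type}.
Notation trans := (transition Q Sig).

Lemma run_along_length (g : list trans) v t tms :
  run_along v t g tms -> length tms = length g.
Proof.
  revert v t tms. induction g; intros v t tms; destruct tms; simpl; try tauto.
  intros [_ [_ H]]. f_equal. eapply IHg; eauto.
Qed.

Lemma run_along_shift (g : list trans) v t tms c : run_along v t g tms ->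
  run_along v (t + c) g (map (fun s => s + c) tms).
Proof.
  revert v t tms. induction g; intros v t tms; destruct tms; simpl; try tauto.
  intros [H1 [H2 H3]]. replace (r + c - (t + c)) with (r - t) by ring.
  split; [lra | split; auto].
Qed.

Lemma run_along_reset (g : list trans) t1 tms : run_along 0 t1 g tms <->
  exists tms0, run_along 0 0 g tms0 /\ tms = map (fun s => s + t1) tms0.
Proof.
  split.
  - intros H. exists (map (fun s => s + - t1) tms). split.
    + pose proof (run_along_shift g 0 t1 tms (- t1) H) as H'.
      rewrite Rplus_opp_r in H'. exact H'.
    + rewrite map_map, <- (map_id tms) at 1. apply map_ext. intros; ring.
  - intros [tms0 [H ->]]. pose proof (run_along_shift g 0 0 tms0 t1 H) as H'.
    rewrite Rplus_0_l in H'. exact H'.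
Qed.

Lemma nth_map_shift (l : list R) k c : (k < length l)%nat ->
  nth k (map (fun s => s + c) l) 0 = nth k l 0 + c.
Proof.
  intros Hk. rewrite (nth_indep _ 0 (0 + c)) by (rewrite length_map; auto).
  apply (map_nth (fun s => s + c)).
Qed.

Lemma run_along_start_le (g : list trans) v t tms : run_along v t g tms -> t <= nth 0 tms t.
Proof. destruct g, tms; simpl; try tauto; lra. Qed.

Lemma run_along_restart (g : list trans) tms v t :
  run_along v v g tms -> t <= nth 0 tms t -> run_along t t g tms.
Proof.
  destruct g as [|tr g], tms as [|y tms]; simpl; try tauto.
  rewrite !Rplus_minus. intros [H1 [H2 H3]] H. auto.
Qed.

(* Runs are started with clock value equal to the start time, so that the
   clock coincides with the global time until the first reset. *)
Definition reachable_from (g : list trans) (v : R) : Prop :=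
  exists tms, run_along v v g tms.
Definition times_from (g : list trans) (v : R) (k : nat) (x : R) : Prop :=
  exists tms, run_along v v g tms /\ nth k tms 0 = x.

Lemma times_from_head (tr : trans) g v x : times_from (tr :: g) v 0 x <->
  v <= x /\ guard_sat (t_guard tr) x /\
  exists tms, run_along (if t_rst tr then 0 else x) x g tms.
Proof.
  split.
  - intros [[|t1 tms] [H Hn]]; [contradiction|]. simpl in H, Hn; subst.
    rewrite Rplus_minus in H. destruct H as [H1 [H2 H3]]. eauto.
  - intros [H1 [H2 [tms H3]]]. exists (x :: tms). simpl. rewrite Rplus_minus. auto.
Qed.

Lemma times_from_succ (tr : trans) g v k x : times_from (tr :: g) v (S k) x <->
  exists t1, times_from (tr :: g) v 0 t1 /\
    exists tms, run_along (if t_rst tr then 0 else t1) t1 g tms /\ nth k tms 0 = x.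
Proof.
  split.
  - intros [[|t1 tms] [H Hn]]; [contradiction|]. simpl in H, Hn.
    rewrite Rplus_minus in H. destruct H as [H1 [H2 H3]].
    exists t1. split; [apply times_from_head; eauto | eauto].
  - intros [t1 [H0 [tms [H3 Hn]]]]. apply times_from_head in H0.
    destruct H0 as [H1 [H2 _]]. exists (t1 :: tms). simpl. rewrite Rplus_minus. auto.
Qed.

Lemma reachable_from_cons_reset (tr : trans) g v : t_rst tr = true ->
  reachable_from (tr :: g) v -> reachable_from g 0.
Proof.
  intros Hrs [[|t1 tms] Hr]; [contradiction|]. simpl in Hr. rewrite Hrs in Hr.
  destruct Hr as [_ [_ Hrest]]. apply run_along_reset in Hrest.
  destruct Hrest as [tms0 [Hr0 _]]. exists tms0. exact Hr0.
Qed.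

Lemma reachable_from_cons_keep (tr : trans) g v : t_rst tr = false -> 0 <= v ->
  reachable_from (tr :: g) v -> reachable_from g (Rmax v (INR (g_lower (t_guard tr)))).
Proof.
  intros Hrs Hv [[|t1 tms] Hr]; [contradiction|]. simpl in Hr.
  rewrite Hrs, Rplus_minus in Hr. destruct Hr as [Hvt [Hg Hrest]].
  destruct (guard_sat_bounds _ t1 ltac:(lra) Hg) as [Hl _].
  exists tms. apply (run_along_restart _ _ t1); auto.
  pose proof (run_along_start_le _ _ _ _ Hrest).
  destruct tms; simpl in *; unfold_minmax.
Qed.

(* Infimum and supremum of the times of the (i+1)-th transition of a run
   started at time v.  After a reset on the first transition the tail is a
   run started at 0, shifted by the time of the first transition. *)
Fixpoint time_inf (v : R) (g : list trans) (i : nat) : R :=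
  match g with
  | [] => Rmax v 0
  | tr :: g' =>
    let l0 := Rmax v (INR (g_lower (t_guard tr))) in
    match i with
    | O => l0
    | S i' => if t_rst tr then l0 + time_inf 0 g' i' else time_inf l0 g' i'
    end
  end.

Fixpoint time_sup (g : list trans) (i : nat) : option R :=
  match g with
  | [] => None
  | tr :: g' =>
    let gu := option_map INR (g_upper (t_guard tr)) in
    let u0 := if t_rst tr then gu else eminR gu (time_sup g' 0) in
    match i with
    | O => u0
    | S i' => if t_rst tr then eaddR u0 (time_sup g' i') else time_sup g' i'
    end
  end.

Definition times_hull (g : list trans) (v : R) (k : nat) : Prop :=
  has_hull (times_from g v k) (time_inf v g k) (time_sup g k).

Lemma time_inf_shape (g : list trans) i :
  exists al be, forall t, time_inf t g i = Rmax t al + be.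
Proof.
  revert i. induction g as [|tr g IH]; intros i.
  - exists 0, 0. intros; simpl; ring.
  - destruct i as [|i].
    + exists (INR (g_lower (t_guard tr))), 0. intros; simpl; ring.
    + simpl. destruct (t_rst tr).
      * exists (INR (g_lower (t_guard tr))), (time_inf 0 g i). auto.
      * destruct (IH i) as [al [be H]].
        exists (Rmax (INR (g_lower (t_guard tr))) al), be.
        intros t. rewrite H. f_equal. unfold_minmax.
Qed.

Section Cons.
Variables (tr : trans) (g : list trans).
Hypothesis tail_hull : forall k v, 0 <= v -> (k < length g)%nat ->
  reachable_from g v -> times_hull g v k.

Lemma reachable_le_sup t : 0 <= t -> reachable_from g t -> le_ebound (time_sup g 0) t.
Proof.
  intros Ht [tms Hr]. destruct tms as [|y tms].
  - destruct g; [exact I | contradiction].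
  - assert (Hy : times_from g t 0 y) by (exists (y :: tms); auto).
    destruct (tail_hull 0 t Ht ltac:(rewrite <- (run_along_length _ _ _ _ Hr); simpl; lia)
               (ex_intro _ _ Hr)) as [_ [Hin _]].
    apply (le_ebound_le _ y); [apply Hin, Hy|]. apply (run_along_start_le _ _ _ _ Hr).
Qed.

Lemma reachable_lt_sup ts t : 0 <= ts -> reachable_from g ts ->
  lt_ebound (time_sup g 0) t -> reachable_from g t.
Proof.
  intros Hts [tms Hr] Hl.
  destruct (Nat.eq_dec (length g) 0) as [Hg|Hg].
  { exists []. destruct g; [exact I | discriminate]. }
  destruct (has_hull_above _ _ _ t (tail_hull 0 ts Hts ltac:(lia) (ex_intro _ _ Hr)) Hl)
    as [y [[tms' [Hr' Hy]] Hty]].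
  exists tms'. apply (run_along_restart _ _ ts); auto.
  destruct tms' as [|y' tms']; simpl in *; [|lra].
  destruct g; [contradiction | contradiction].
Qed.

Lemma times_hull_head v : 0 <= v -> reachable_from (tr :: g) v -> times_hull (tr :: g) v 0.
Proof.
  intros Hv [[|t1 tms] Hr]; [contradiction|].
  assert (Ht1 : times_from (tr :: g) v 0 t1) by (exists (t1 :: tms); auto).
  split; [eauto | split]; unfold time_inf, time_sup; fold (time_sup g 0).
  - intros x Hx. apply times_from_head in Hx. destruct Hx as [Hvx [Hg Hrest]].
    destruct (guard_sat_bounds _ x ltac:(lra) Hg). split; [unfold_minmax|].
    destruct (t_rst tr); auto. apply le_eminR. split; auto.
    apply reachable_le_sup; [lra | exact Hrest].
  - intros x Hx Hl. apply times_from_head in Ht1. destruct Ht1 as [Hvt [_ Hrest]].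
    apply times_from_head. split; [unfold_minmax|].
    destruct (t_rst tr).
    + split; [apply guard_sat_between; auto; unfold_minmax|].
      destruct Hrest as [tms1 Hrest]. apply run_along_reset in Hrest.
      destruct Hrest as [tms0 [Hr0 _]].
      exists (map (fun s => s + x) tms0). apply run_along_reset. eauto.
    + apply lt_eminR in Hl. destruct Hl as [Hl Hl'].
      split; [apply guard_sat_between; auto; unfold_minmax|].
      apply (reachable_lt_sup t1); auto. lra.
Qed.

Lemma times_hull_succ_reset v k : t_rst tr = true -> 0 <= v -> (k < length g)%nat ->
  reachable_from (tr :: g) v -> times_hull (tr :: g) v (S k).
Proof.
  intros Hrs Hv Hk Hr.
  assert (Hhead := times_hull_head v Hv Hr).
  assert (Htail := tail_hull k 0 (Rle_refl 0) Hk (reachable_from_cons_reset _ _ _ Hrs Hr)).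
  unfold times_hull in *. simpl in *. rewrite Hrs in *.
  eapply has_hull_ext; [|exact (has_hull_minkowski _ _ _ _ _ _ Hhead Htail)].
  intros x. rewrite times_from_succ, Hrs. split.
  - intros [p [q [Hp [[tq [Hq Hnth]] ->]]]]. exists p. split; auto.
    exists (map (fun s => s + p) tq). split; [apply run_along_reset; eauto|].
    rewrite nth_map_shift; [lra|]. rewrite (run_along_length _ _ _ _ Hq). auto.
  - intros [p [Hp [tq [Hq Hnth]]]]. apply run_along_reset in Hq.
    destruct Hq as [tq0 [Hq0 ->]]. exists p, (nth k tq0 0).
    split; [auto | split; [exists tq0; auto|]].
    rewrite nth_map_shift in Hnth; [lra|]. rewrite (run_along_length _ _ _ _ Hq0). auto.
Qed.

Lemma times_hull_succ_keep v k : t_rst tr = false -> 0 <= v -> (k < length g)%nat ->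
  reachable_from (tr :: g) v -> times_hull (tr :: g) v (S k).
Proof.
  intros Hrs Hv Hk Hr.
  assert (Hhead := times_hull_head v Hv Hr).
  destruct (time_inf_shape g k) as [al [be Hf]].
  unfold times_hull in *. simpl in *. rewrite Hrs in *.
  eapply has_hull_ext; [|refine (has_hull_union _ _ _ (fun t => times_from g t k)
                                   (fun t => time_inf t g k) al be _ Hhead _ Hf)].
  - intros x. rewrite times_from_succ, Hrs. reflexivity.
  - intros t Ht. apply times_from_head in Ht. rewrite Hrs in Ht.
    destruct Ht as [Hvt [_ Hrest]]. apply tail_hull; auto. lra.
Qed.

End Cons.

Theorem times_hull_of_reachable (g : list trans) k v : 0 <= v -> (k < length g)%nat ->
  reachable_from g v -> times_hull g v k.
Proof.
  revert k v. induction g as [|tr g IH]; intros k v Hv Hk Hr; [simpl in Hk; lia|].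
  destruct k as [|k]; [exact (times_hull_head tr g IH v Hv Hr)|]. simpl in Hk.
  destruct (t_rst tr) eqn:Hrs.
  - apply times_hull_succ_reset; auto; lia.
  - apply times_hull_succ_keep; auto; lia.
Qed.

Lemma time_sup_head (g : list trans) :
  time_sup g 0 = option_map INR (nth 0 (bwd_upper g) None).
Proof.
  induction g as [|tr g IH]; [reflexivity|].
  simpl. destruct (bwd_upper g) as [|u r]; simpl in IH; rewrite IH.
  - destruct (t_rst tr), (g_upper (t_guard tr)); reflexivity.
  - destruct (t_rst tr); auto. rewrite INR_omin. reflexivity.
Qed.

Lemma last_reset_cons (tr : trans) g k :
  last_reset (tr :: g) (S k) =
  match last_reset g k with
  | Some j => Some (S j)
  | None => if t_rst tr then Some 1%nat else None
  end.
Proof.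
  induction k as [|k IH]; [reflexivity|].
  change (last_reset (tr :: g) (S (S k))) with
    (if reset_at g (S k) then Some (S (S k)) else last_reset (tr :: g) (S k)).
  change (last_reset g (S k)) with
    (if reset_at g (S k) then Some (S k) else last_reset g k).
  destruct (reset_at g (S k)); auto.
Qed.

Lemma last_reset_bounds (g : list trans) k j :
  last_reset g k = Some j -> (1 <= j <= k)%nat.
Proof.
  induction k as [|k IH]; intros H; [discriminate|].
  change (last_reset g (S k)) with
    (if reset_at g (S k) then Some (S k) else last_reset g k) in H.
  destruct (reset_at g (S k)); [injection H; lia|]. specialize (IH H); lia.
Qed.

(* Transitions are indexed from 0 here: for runs started at time [c],
   [time_width g c k] is the width of the times of the (k+1)-th transition,
   [duration g c k] is its feasible duration and [trail_width g c k] is w_k. *)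
Definition time_width (g : list trans) (c k : nat) : option R :=
  option_map (fun b => b - time_inf (INR c) g k) (time_sup g k).

Definition duration (g : list trans) (c k : nat) : option nat :=
  match nth k (bwd_upper g) None with
  | None => None
  | Some u => Some (u - nth k (fwd_lower c g) 0)%nat
  end.

Definition trail_width (g : list trans) (c k : nat) : option R :=
  match last_reset g k with
  | Some j => time_width g c (j - 1)
  | None => Some 0
  end.

Lemma time_width_head (tr : trans) g c : reachable_from (tr :: g) (INR c) ->
  time_width (tr :: g) c 0 = eadd (Some 0) (duration (tr :: g) c 0).
Proof.
  intros Hr.
  destruct (times_hull_of_reachable (tr :: g) 0 (INR c) (pos_INR c) ltac:(simpl; lia) Hr)
    as [[e He] [Hin _]].
  destruct (Hin e He) as [Hlo Hup].
  unfold time_width, duration. rewrite time_sup_head in *.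
  change (time_inf (INR c) (tr :: g) 0) with (Rmax (INR c) (INR (g_lower (t_guard tr)))) in *.
  change (nth 0 (fwd_lower c (tr :: g)) 0%nat) with (Nat.max c (g_lower (t_guard tr))).
  destruct (nth 0 (bwd_upper (tr :: g)) None) as [u|]; [|reflexivity].
  simpl in *. rewrite <- INR_max in *.
  rewrite minus_INR; [f_equal; ring|]. apply INR_le. lra.
Qed.

Section ConsWidth.
Variables (tr : trans) (g : list trans) (c : nat).

Lemma time_width_cons_reset j : t_rst tr = true ->
  time_width (tr :: g) c (S j) = eaddR (time_width (tr :: g) c 0) (time_width g 0 j).
Proof.
  intros Hrs. unfold time_width. simpl. rewrite Hrs.
  destruct (option_map INR (g_upper (t_guard tr))), (time_sup g j); simpl; auto.
  f_equal. ring.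
Qed.

Lemma time_width_cons_keep j : t_rst tr = false ->
  time_width (tr :: g) c (S j) = time_width g (Nat.max c (g_lower (t_guard tr))) j.
Proof. intros Hrs. unfold time_width. simpl. rewrite Hrs, INR_max. reflexivity. Qed.

Lemma trail_width_cons_reset k : t_rst tr = true ->
  trail_width (tr :: g) c (S k) = eaddR (time_width (tr :: g) c 0) (trail_width g 0 k).
Proof.
  intros Hrs. unfold trail_width. rewrite last_reset_cons, Hrs.
  destruct (last_reset g k) as [j|] eqn:Hj.
  - pose proof (last_reset_bounds _ _ _ Hj). destruct j as [|j]; [lia|].
    replace (S (S j) - 1)%nat with (S j) by lia. replace (S j - 1)%nat with j by lia.
    apply time_width_cons_reset, Hrs.
  - simpl. destruct (time_width (tr :: g) c 0); simpl; auto. f_equal; ring.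
Qed.

Lemma trail_width_cons_keep k : t_rst tr = false ->
  trail_width (tr :: g) c (S k) = trail_width g (Nat.max c (g_lower (t_guard tr))) k.
Proof.
  intros Hrs. unfold trail_width. rewrite last_reset_cons, Hrs.
  destruct (last_reset g k) as [j|] eqn:Hj; auto.
  pose proof (last_reset_bounds _ _ _ Hj). destruct j as [|j]; [lia|].
  replace (S (S j) - 1)%nat with (S j) by lia. replace (S j - 1)%nat with j by lia.
  apply time_width_cons_keep, Hrs.
Qed.

End ConsWidth.

Theorem time_width_decomp (g : list trans) c k :
  reachable_from g (INR c) -> (k < length g)%nat ->
  time_width g c k = eadd (trail_width g c k) (duration g c k).
Proof.
  revert c k. induction g as [|tr g IH]; intros c k Hr Hk; [simpl in Hk; lia|].
  destruct k as [|k]; [exact (time_width_head tr g c Hr)|]. simpl in Hk.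
  change (duration (tr :: g) c (S k)) with
    (duration g (if t_rst tr then 0%nat else Nat.max c (g_lower (t_guard tr))) k).
  destruct (t_rst tr) eqn:Hrs.
  - rewrite time_width_cons_reset, trail_width_cons_reset, eaddR_eadd_assoc, <- IH;
      auto; [|lia].
    exact (reachable_from_cons_reset _ _ _ Hrs Hr).
  - rewrite time_width_cons_keep, trail_width_cons_keep, <- IH; auto; [|lia].
    rewrite INR_max. exact (reachable_from_cons_keep _ _ _ Hrs (pos_INR c) Hr).
Qed.

End Runs.

Theorem proposition1 (Q Sig : Type) (A : eNTA Q Sig)
    (g : list (transition Q Sig)) :
  wf_eNTA A -> is_path A g -> reachable g ->
  (forall i : nat, (1 <= i <= length g)%nat ->
     s_gamma g i = eadd (w_gamma g (i - 1)) (d_gamma g i)) /\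
  (forall i : nat, (i <= length g)%nat ->
     w_gamma g i =
       (if Nat.eqb i 0 then Some 0
        else if reset_at g i then s_gamma g i
        else w_gamma g (i - 1))).
Proof.
  intros _ _ [tms Hr].
  assert (Hr0 : reachable_from g (INR 0)) by (exists tms; exact Hr).
  assert (Hs : forall j, (1 <= j <= length g)%nat -> s_gamma g j = time_width g 0 (j - 1)).
  { intros j Hj. change (set_width (times_from g (INR 0) (j - 1)) = time_width g 0 (j - 1)).
    apply set_width_hull, (times_hull_of_reachable g (j - 1) (INR 0)); auto with real; lia. }
  split.
  - intros i Hi. rewrite Hs, time_width_decomp by (auto; lia).
    unfold w_gamma, trail_width. destruct (last_reset g (i - 1)) as [j|] eqn:Hj; auto.
    rewrite Hs; [reflexivity|]. pose proof (last_reset_bounds _ _ _ Hj). lia.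
  - intros [|i] Hi; [reflexivity|]. unfold w_gamma.
    change (last_reset g (S i)) with
      (if reset_at g (S i) then Some (S i) else last_reset g i).
    rewrite Nat.sub_succ, Nat.sub_0_r. destruct (reset_at g (S i)); reflexivity.
Qed.
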